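(* For any integers $n \geq 3$ and $m \geq 1$, $\chi_\rho(FSSD_m(K_n)) = n+1$.
   Context: All graphs are finite and simple. For a positive integer $i$, an $i$-packing in a graph $G$ is a set of vertices any two distinct members of which are at distance greater than $i$. The packing chromatic number $\chi_\rho(G)$ is the smallest integer $k$ such that $V(G)$ can be partitioned into sets $V_1,\dots,V_k$ with each $V_i$ an $i$-packing. For a positive integer $m$, $FSSD_m(G)$ is obtained from $G$ by replacing each edge $uv$ of $G$ by a copy of $K_{2,m}$: the edge $uv$ is deleted and $m$ new vertices are added, each adjacent to exactly $u$ and $v$. $K_n$ is the complete graph on $n$ vertices. *)

From mathcomp Require Import all_boot.
Set Implicit Arguments. Unset Strict Implicit. Unset Printing Implicit Defensive.

(* A simple graph on a finite vertex type T is given by an adjacency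
   relation e : rel T (symmetric, irreflexive). *)

Definition dist_le (T : finType) (e : rel T) (i : nat) (x y : T) : Prop :=
  exists s : seq T, [/\ size s <= i, path e x s & last x s = y].

Definition is_packing (T : finType) (e : rel T) (i : nat) (S : {set T}) : Prop :=
  forall x y, x \in S -> y \in S -> x != y -> ~ dist_le e i x y.

(* V(G) partitioned into V_1, ..., V_k with V_i an i-packing; the class
   V_(j+1) is encoded as the fibre of c over j : 'I_k. *)
Definition packing_colorable (T : finType) (e : rel T) (k : nat) : Prop :=
  exists c : T -> 'I_k, forall j : 'I_k, is_packing e j.+1 [set x | c x == j].

Definition packing_chromatic_number_is (T : finType) (e : rel T) (r : nat) : Prop :=
  packing_colorable e r /\ forall k, packing_colorable e k -> r <= k.

Definition K (n : nat) : rel 'I_n := fun x y => x != y.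
Arguments K n : clear implicits.

Definition is_edge_set (T : finType) (e : rel T) (S : {set T}) : bool :=
  [exists u, exists v, e u v && (S == [set u; v])].

(* vertices of FSSD_m(G): old vertices, plus m new vertices per edge uv *)
Notation fssd_V T e m :=
  (T + {p : {set T} * 'I_m | is_edge_set e p.1})%type.

Definition fssd (T : finType) (e : rel T) (m : nat) : rel (fssd_V T e m) :=
  fun a b => match a, b with
             | inl u, inr w => u \in (val w).1
             | inr w, inl u => u \in (val w).1
             | _, _ => false
             end.
Arguments fssd {T} e m.

(* Colour j : 'I_k is the paper's colour j + 1.  Upper bound: all subdivision
   vertices form an independent set and get colour 1, the n original vertices
   get the distinct colours 2, ..., n + 1.  Lower bound: any two original
   vertices, and any two subdivision vertices on edges with a common end, are
   at distance 2, so they can share only colour 1.  If no original vertex has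
   colour 1, the original vertices need n colours besides 1.  If u has colour 1,
   the subdivision vertices u x carry n - 1 distinct colours besides 1; were
   there only n colours, the x with colour 2 on u x would have colour 1 as
   well, and then the top colour n, used next to both u and x, could only sit
   on u x itself, which has colour 2. *)
From mathcomp Require Import all_boot zify.
Set Implicit Arguments. Unset Strict Implicit. Unset Printing Implicit Defensive.

Section Distance.
Variables (T : finType) (e : rel T).

Lemma dist_le_refl i x : dist_le e i x x.
Proof. by exists [::]. Qed.

Lemma dist_le_edge x y : e x y -> dist_le e 1 x y.
Proof. by move=> exy; exists [:: y]; rewrite /= exy. Qed.

Lemma dist_le_mono i j x y : i <= j -> dist_le e i x y -> dist_le e j x y.
Proof. by move=> ij [s [si ps ls]]; exists s; split=> //; apply: leq_trans ij. Qed.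

Lemma dist_le_trans i j x y z :
  dist_le e i x y -> dist_le e j y z -> dist_le e (i + j) x z.
Proof.
move=> [s [si ps <-]] [t [tj pt <-]]; exists (s ++ t).
by rewrite size_cat cat_path last_cat ps pt leq_add.
Qed.

Lemma dist_le_sym i x y : symmetric e -> dist_le e i x y -> dist_le e i y x.
Proof.
move=> e_sym [s [si ps <-]]; exists (rev (belast x s)); split.
- by rewrite size_rev size_belast.
- by rewrite rev_path (eq_path (e' := e)) // => a b; rewrite /= e_sym.
- by case: s {si ps} => [|z s] //=; rewrite rev_cons last_rcons.
Qed.

Definition packing_coloring k (c : T -> 'I_k) :=
  forall j : 'I_k, is_packing e j.+1 [set x | c x == j].

Lemma packing_coloring_far k (c : T -> 'I_k) d a b :
  packing_coloring c -> c a = c b -> a != b -> dist_le e d a b -> (c a).+1 < d.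
Proof.
move=> hc cab ab dab; rewrite ltnNge; apply/negP => dle.
apply: (hc (c a) a b _ _ ab (dist_le_mono dle dab)); by rewrite inE ?cab.
Qed.

End Distance.

Section Subdivision.
Variables (T : finType) (e : rel T) (m : nat).

Lemma fssd_sym : symmetric (fssd e m).
Proof. by move=> [u|w] [v|w']. Qed.

Lemma fssd_packing_colorable : packing_colorable (fssd e m) #|T|.+1.
Proof.
exists (fun a => if a is inl u then lift ord0 (enum_rank u) else ord0).
move=> j [u|w] [v|w']; rewrite !inE => /eqP <- /eqP.
- by move/lift_inj/enum_rank_inj => ->; rewrite eqxx.
- by move=> E; have := neq_lift ord0 (enum_rank u); rewrite -E eqxx.
- by move=> E; have := neq_lift ord0 (enum_rank v); rewrite E eqxx.
move=> _ ww' [s [s1 ps ls]].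
case: s s1 ps ls => [|a [|b s]] //= _; first by move=> _ ls; rewrite ls eqxx in ww'.
by rewrite andbT => waw ls; rewrite ls in waw.
Qed.

End Subdivision.

Section CompleteGraph.
Variables n m : nat.
Local Notation V := (fssd_V 'I_n (K n) m.+1).
Local Notation G := (fssd (K n) m.+1).

Lemma edge_set_pair (u x : 'I_n) : u != x -> is_edge_set (K n) [set u; x].
Proof.
by move=> ux; apply/existsP; exists u; apply/existsP; exists x; rewrite /K ux eqxx.
Qed.

(* The subdivision vertex of copy 0 on the edge ux; for u = x there is no edge and
   the junk value inl u is chosen so that the distance bounds below hold for
   all pairs. *)
Definition subdiv (u x : 'I_n) : V :=
  if insub ([set u; x], ord0) is Some w then inr w else inl u.

Definition ends (a : V) : {set 'I_n} :=
  match a with inl u => [set u] | inr w => (val w).1 end.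

Lemma subdivE u x (ux : u != x) :
  subdiv u x = inr (exist _ ([set u; x], ord0) (edge_set_pair ux)).
Proof.
rewrite /subdiv; case: insubP => [w _ wE | ]; last by rewrite edge_set_pair.
by congr inr; apply: val_inj; rewrite wE.
Qed.

Lemma subdivxx u : subdiv u u = inl u.
Proof.
rewrite /subdiv insubF //=; apply/negbTE/existsP => -[a /existsP [b /andP [ab /eqP uuE]]].
have: [set a; b] \subset [set u] by rewrite -uuE setUid.
by rewrite subUset !sub1set !inE => /andP [/eqP au /eqP bu]; rewrite /K au bu eqxx in ab.
Qed.

Lemma subdivC u x : subdiv u x = subdiv x u.
Proof.
have [->|ux] := eqVneq u x; first by [].
have xu : x != u by rewrite eq_sym.
by rewrite (subdivE ux) (subdivE xu); congr inr; apply: val_inj; rewrite /= setUC.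
Qed.

Lemma ends_subdiv u x : ends (subdiv u x) = [set u; x].
Proof. by have [->|ux] := eqVneq u x; [rewrite subdivxx setUid | rewrite subdivE]. Qed.

Lemma subdiv_inj u : injective (subdiv u).
Proof.
move=> x y /(congr1 ends); rewrite !ends_subdiv => E.
have: x \in [set u; y] by rewrite -E set22.
rewrite in_set2 => /orP [/eqP xu | /eqP //].
have: y \in [set u; x] by rewrite E set22.
by rewrite xu in_set2 orbb => /eqP.
Qed.

Lemma dist_inl_subdiv u x : dist_le G 1 (inl u) (subdiv u x).
Proof.
have [<-|ux] := eqVneq u x; first by rewrite subdivxx; apply: dist_le_refl.
by apply: dist_le_edge; rewrite (subdivE ux) /fssd /= set21.
Qed.

Lemma dist_subdiv_inl u x : dist_le G 1 (subdiv u x) (inl u).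
Proof. exact: dist_le_sym (@fssd_sym _ (K n) m.+1) (dist_inl_subdiv u x). Qed.

Lemma dist_inl_inl x y : dist_le G 2 (inl x) (inl y).
Proof.
by apply: (dist_le_trans (dist_inl_subdiv x y)); rewrite subdivC; apply: dist_subdiv_inl.
Qed.

Lemma dist_subdiv_subdiv u x y : dist_le G 2 (subdiv u x) (subdiv u y).
Proof. exact: dist_le_trans (dist_subdiv_inl u x) (dist_inl_subdiv u y). Qed.

Lemma dist_inl_subdiv3 x u y : dist_le G 3 (inl x) (subdiv u y).
Proof.
apply: (dist_le_trans (dist_inl_subdiv x u)).
by rewrite subdivC; apply: dist_subdiv_subdiv.
Qed.

Lemma dist_subdiv4 x y u z : dist_le G 4 (subdiv x y) (subdiv u z).
Proof. exact: dist_le_trans (dist_subdiv_inl x y) (dist_inl_subdiv3 x u z). Qed.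

Lemma neq_of_ends (a b : V) (v : 'I_n) : v \in ends a -> v \notin ends b -> a != b.
Proof. by move=> va vb; apply: contraNneq vb => <-. Qed.

Lemma inl_neq_subdiv x u y : x != u -> inl x != subdiv u y.
Proof.
by move=> xu; rewrite eq_sym (@neq_of_ends _ _ u) ?ends_subdiv ?set21 // inE eq_sym.
Qed.

Variables (k : nat) (c : V -> 'I_k).
Hypothesis hc : packing_coloring G c.

Lemma lt_of_inl_col_neq0 : 0 < n -> (forall x, c (inl x) != 0 :> nat) -> n < k.
Proof.
move=> n0 hx0.
have k0 : 0 < k := leq_ltn_trans (leq0n _) (ltn_ord (c (inl (Ordinal n0)))).
pose h (o : option 'I_n) := if o is Some x then c (inl x) else Ordinal k0.
suff h_inj : injective h by have := leq_card h h_inj; rewrite card_option !card_ord.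
move=> [x|] [y|] //= hE; last 2 first.
- by have := hx0 x; rewrite hE.
- by have := hx0 y; rewrite -hE.
congr Some; apply/eqP; apply: contraTT isT => xy.
have := packing_coloring_far hc hE _ (dist_inl_inl x y).
by rewrite ltnS ltnS leqn0 (negbTE (hx0 x)); apply.
Qed.

Section ZeroColoredVertex.
Variable u : 'I_n.
Hypothesis hu : c (inl u) = 0 :> nat.

Lemma subdiv_col_eq0 x : (c (subdiv u x) == 0 :> nat) = (x == u).
Proof.
apply/eqP/eqP => [hx | ->]; last by rewrite subdivxx.
apply/eqP; apply: contraTT isT => xu.
have hE : c (subdiv u x) = c (inl u) by apply: val_inj; rewrite /= hx hu.
have := packing_coloring_far hc hE _ (dist_subdiv_inl u x).
by rewrite hx ltnn -(subdivxx u) (inj_eq (@subdiv_inj u)); apply.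
Qed.

Lemma subdiv_col_inj : injective (fun x => c (subdiv u x)).
Proof.
move=> x y /= hE; apply/eqP; apply: contraTT isT => xy.
have := packing_coloring_far hc hE _ (dist_subdiv_subdiv u x y).
rewrite (inj_eq (@subdiv_inj u)) ltnS ltnS leqn0 => /(_ xy) x0.
move: x0 (x0); rewrite {2}hE !subdiv_col_eq0 => /eqP xu /eqP yu.
by rewrite xu yu eqxx in xy.
Qed.

Lemma subdiv_col_onto : k <= n -> forall j, exists x, c (subdiv u x) = j.
Proof.
move=> kn j; have kn' : #|'I_k| <= #|'I_n| by rewrite !card_ord.
by have /codomP [x ->] := inj_card_onto subdiv_col_inj kn' j; exists x.
Qed.

Lemma inl_col0_of_subdiv_col1 x :
  k <= n -> c (subdiv u x) = 1 :> nat -> c (inl x) = 0 :> nat.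
Proof.
move=> kn hx1; have xu : x != u by rewrite -subdiv_col_eq0 hx1.
apply/eqP; apply: contraT => hx0.
have [y hy] := subdiv_col_onto kn (c (inl x)).
have := packing_coloring_far hc (esym hy) (inl_neq_subdiv y xu).
move/(_ _ (dist_inl_subdiv3 x u y)); rewrite !ltnS => hx_le1.
have hE : c (inl x) = c (subdiv u x) by apply: val_inj; rewrite /= hx1; lia.
have d1 : dist_le G 1 (inl x) (subdiv u x) by rewrite subdivC; apply: dist_inl_subdiv.
by have := packing_coloring_far hc hE (inl_neq_subdiv x xu) d1.
Qed.

End ZeroColoredVertex.

Lemma subdiv_col_top u x :
  c (inl u) = 0 :> nat -> c (inl x) = 0 :> nat -> u != x -> k <= n -> 1 < k ->
  c (subdiv u x) = k.-1 :> nat.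
Proof.
move=> hu hx ux kn k1; apply/eqP; apply: contraT => hux.
have nk : n <= k by have := leq_card _ (subdiv_col_inj hu); rewrite !card_ord.
have top : k.-1 < k by lia.
have [y hy] := subdiv_col_onto hx kn (Ordinal top).
have [z hz] := subdiv_col_onto hu kn (Ordinal top).
have hE : c (subdiv x y) = c (subdiv u z) by rewrite hy hz.
have yx : y != x by rewrite -(subdiv_col_eq0 hx) hy /=; lia.
have zu : z != u by rewrite -(subdiv_col_eq0 hu) hz /=; lia.
have yu : y != u by apply/eqP => yu; move: hux; rewrite subdivC -yu hy eqxx.
have zx : z != x by apply/eqP => zx; move: hux; rewrite -zx hz eqxx.
have xy_uz : subdiv x y != subdiv u z.
  by rewrite (@neq_of_ends _ _ x) ?ends_subdiv ?set21 // !inE negb_or eq_sym ux eq_sym zx.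
have [yz|yz] := eqVneq y z.
  have := packing_coloring_far hc hE xy_uz.
  rewrite hy -yz (subdivC x) (subdivC u) /= => /(_ _ (dist_subdiv_subdiv _ _ _)); lia.
have := packing_coloring_far hc hE xy_uz (dist_subdiv4 x y u z); rewrite hy /=.
move: ux yx zu yu zx yz; rewrite -!(inj_eq val_inj) /= => ux yx zu yu zx yz.
have := ltn_ord u; have := ltn_ord x; have := ltn_ord y; have := ltn_ord z; lia.
Qed.

Lemma lt_of_inl_col0 u : 2 < n -> c (inl u) = 0 :> nat -> n < k.
Proof.
move=> n3 hu; rewrite ltnNge; apply/negP => kn.
have nk : n <= k by have := leq_card _ (subdiv_col_inj hu); rewrite !card_ord.
have k1 : 1 < k by lia.
have [x hx] := subdiv_col_onto hu kn (Ordinal k1).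
have hx1 : c (subdiv u x) = 1 :> nat by rewrite hx.
have ux : u != x by rewrite eq_sym -(subdiv_col_eq0 hu) hx1.
have := subdiv_col_top hu (inl_col0_of_subdiv_col1 hu kn hx1) ux kn k1.
by rewrite hx1; lia.
Qed.

Lemma fssd_complete_packing_lt : 2 < n -> n < k.
Proof.
move=> n3; case: (boolP [exists u, c (inl u) == 0 :> nat]).
  by move=> /existsP [u /eqP hu]; apply: lt_of_inl_col0 hu.
by move=> /existsPn hx0; apply: lt_of_inl_col_neq0; [lia | exact: hx0].
Qed.

End CompleteGraph.

Theorem corollary1 (n m : nat) :
  3 <= n -> 1 <= m -> packing_chromatic_number_is (fssd (K n) m) n.+1.
Proof.
case: m => [//|m] n3 _; split.
  by have := fssd_packing_colorable (K n) m.+1; rewrite card_ord.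
by move=> k [c hc]; apply: fssd_complete_packing_lt hc n3.
Qed.
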